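(* Consider an instance of the bicriteria asymmetric traveling salesman problem (bi-ATSP) with tour set $\mathcal{C}$, vector criterion $D=(D_1,D_2)$ and outcome set $\mathcal{D}=D(\mathcal{C})$. Let $i,j\in\{1,2\}$, $i\neq j$, and suppose criterion $D_i$ is more important than criterion $D_j$ with coefficient of relative importance $\theta\in(0,1)$; let $\hat P(\mathcal{D})$ be the corresponding reduced Pareto set. Suppose there exist tours $C', C'' \in P_D(\mathcal{C})$ with $D_j(C'')\neq D_j(C')$ such that $$\frac{D_i(C') - D_i(C'')}{D_j(C'') - D_j(C')} \geqslant \frac{1 - \theta}{\theta}.$$ Then $|P(\mathcal{D})| - |\hat{P}(\mathcal{D})| \geqslant 1$.
   Context: Bi-ATSP: given a complete directed graph $G=(V,E)$ on $n$ vertices, each arc $e\in E$ carries a weight vector $d(e)=(d_1(e),d_2(e))$ of positive numbers. $\mathcal{C}$ is the set of all $(n-1)!$ Hamiltonian circuits (tours) of $G$, and for a tour $C$, $D(C)=(D_1(C),D_2(C))$ with $D_j(C)=\sum_{e\in C} d_j(e)$. For vectors $y^*,y$, write $y^*\leq y$ if $y^*\neq y$ and $y^*_s\leqslant y_s$ for every coordinate $s$ (Pareto relation). For a vector criterion $F$ on $\mathcal{C}$, the set of pareto-optimal tours is $P_F(\mathcal{C})=\{C\in\mathcal{C}: \nexists C^*\in\mathcal{C},\ F(C^* )\leq F(C)\}$. The Pareto set is $P(\mathcal{D})=\{y\in\mathcal{D}: \nexists y^*\in\mathcal{D},\ y^*\leq y\}$. Reduced Pareto set: if criterion $D_i$ is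 declared more important than criterion $D_j$ ($\{i,j\}=\{1,2\}$) with coefficient of relative importance $\theta\in(0,1)$, define the new criterion $\hat D$ by $\hat D_j=\theta D_i+(1-\theta)D_j$ and $\hat D_i=D_i$, and set $\hat{P}(\mathcal{D})=D(P_{\hat D}(\mathcal{C}))$ (a subset of $P(\mathcal{D})$). *)

From HB Require Import structures.
From mathcomp Require Import all_boot all_order all_algebra all_fingroup.
Set Implicit Arguments. Unset Strict Implicit. Unset Printing Implicit Defensive.
Import Order.TTheory GRing.Theory Num.Theory.
Local Open Scope ring_scope.

(* A Hamiltonian circuit (tour) is
   encoded by its successor permutation s : {perm 'I_n}, which must be a
   single n-cycle; its arcs are (v, s v). *)
Definition is_tour (n : nat) (s : {perm 'I_n}) : bool :=
  [forall x, porbit s x == [set: 'I_n]].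

(* Arc weights: d k u v = d_{k+1}((u,v)), k : 'I_2. *)
Definition weights_pos (R : realFieldType) (n : nat)
  (d : 'I_2 -> 'I_n -> 'I_n -> R) : Prop :=
  forall k u v, u != v -> 0 < d k u v.

Definition Dvec (R : realFieldType) (n : nat) (d : 'I_2 -> 'I_n -> 'I_n -> R)
  (s : {perm 'I_n}) : {ffun 'I_2 -> R} :=
  [ffun k => \sum_(v : 'I_n) d k v (s v)].

Definition pdom (R : realFieldType) (y' y : {ffun 'I_2 -> R}) : bool :=
  (y' != y) && [forall k, y' k <= y k].

Definition pareto_tours (R : realFieldType) (n : nat)
  (F : {perm 'I_n} -> {ffun 'I_2 -> R}) : {set {perm 'I_n}} :=
  [set s | is_tour s && ~~ [exists s', is_tour s' && pdom (F s') (F s)]].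

Definition outcomes (R : realFieldType) (n : nat) (d : 'I_2 -> 'I_n -> 'I_n -> R)
  : seq {ffun 'I_2 -> R} :=
  undup [seq Dvec d s | s <- enum [set s : {perm 'I_n} | is_tour s]].

Definition pareto_set (R : realFieldType) (n : nat) (d : 'I_2 -> 'I_n -> 'I_n -> R)
  : seq {ffun 'I_2 -> R} :=
  [seq y <- outcomes d | ~~ has (fun y' => pdom y' y) (outcomes d)].

Definition Dhat (R : realFieldType) (n : nat) (d : 'I_2 -> 'I_n -> 'I_n -> R)
  (i j : 'I_2) (theta : R) (s : {perm 'I_n}) : {ffun 'I_2 -> R} :=
  [ffun k => if k == j then theta * Dvec d s i + (1 - theta) * Dvec d s j
             else Dvec d s k].

Definition reduced_pareto_set (R : realFieldType) (n : nat)
  (d : 'I_2 -> 'I_n -> 'I_n -> R) (i j : 'I_2) (theta : R)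
  : seq {ffun 'I_2 -> R} :=
  undup [seq Dvec d s | s <- enum (pareto_tours (Dhat d i j theta))].

(* Of two Pareto-optimal tours C', C'' with D_j(C') < D_j(C''), the ratio
   hypothesis says that C'' gains at least (1 - theta)/theta units of D_i per
   unit of D_j it loses.  This is exactly the condition for the reduced
   criterion theta D_i + (1 - theta) D_j of C'' to be at most that of C', and
   it forces D_i(C'') < D_i(C'); so C'' dominates C' for the reduced criterion.
   Hence D(C') lies in P(D) but not in the reduced Pareto set, which is a
   subset of P(D) because the reduction preserves Pareto domination. *)

From HB Require Import structures.
From mathcomp Require Import all_boot all_order all_algebra all_fingroup.
From mathcomp Require Import lra.
Import Order.TTheory GRing.Theory Num.Theory.
Local Open Scope ring_scope.

Set Implicit Arguments.
Unset Strict Implicit.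

Lemma ord2_cases (i j k : 'I_2) : i != j -> k = i \/ k = j.
Proof.
case: i => [[|[|?]] ?]; case: j => [[|[|?]] ?]; case: k => [[|[|?]] ?] //= _;
  by [left; apply: val_inj | right; apply: val_inj].
Qed.

Lemma pdomE (R : realFieldType) (i j : 'I_2) (y' y : {ffun 'I_2 -> R}) :
  i != j -> pdom y' y =
  ((y' i < y i) && (y' j <= y j)) || ((y' i <= y i) && (y' j < y j)).
Proof.
move=> ij; rewrite /pdom.
have -> : (y' == y) = (y' i == y i) && (y' j == y j).
  apply/eqP/andP => [-> // | [/eqP eq_i /eqP eq_j]].
  by apply/ffunP => k; case: (ord2_cases k ij) => ->.
have -> : [forall k, y' k <= y k] = (y' i <= y i) && (y' j <= y j).
  apply/forallP/andP => [le_y | [le_i le_j] k]; first by split; apply: le_y.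
  by case: (ord2_cases k ij) => ->.
rewrite !lt_neqAle.
by case: (y' i == y i); case: (y' j == y j); case: (y' i <= y i);
  case: (y' j <= y j).
Qed.

Section Reduction.
Variables (R : realFieldType) (i j : 'I_2) (theta : R).
Hypotheses (neq_ij : i != j) (theta_01 : 0 < theta < 1).

Definition reduce (y : {ffun 'I_2 -> R}) : {ffun 'I_2 -> R} :=
  [ffun k => if k == j then theta * y i + (1 - theta) * y j else y k].

Lemma reduce_i (y : {ffun 'I_2 -> R}) : reduce y i = y i.
Proof. by rewrite ffunE (negbTE neq_ij). Qed.

Lemma reduce_j (y : {ffun 'I_2 -> R}) :
  reduce y j = theta * y i + (1 - theta) * y j.
Proof. by rewrite ffunE eqxx. Qed.

Lemma pdom_reduce (y' y : {ffun 'I_2 -> R}) :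
  pdom y' y -> pdom (reduce y') (reduce y).
Proof.
case/andP: theta_01 => theta_gt0 theta_lt1.
rewrite !(pdomE _ _ neq_ij) !reduce_i !reduce_j.
by case/orP=> /andP[lt_i le_j]; apply/orP; [left | right]; apply/andP; nra.
Qed.

Lemma reduce_pdom_of_tradeoff (y' y : {ffun 'I_2 -> R}) :
  y j < y' j -> (1 - theta) / theta <= (y i - y' i) / (y' j - y j) ->
  pdom (reduce y') (reduce y).
Proof.
case/andP: theta_01 => theta_gt0 theta_lt1 lt_j.
rewrite ler_pdivlMr ?subr_gt0 // mulrAC ler_pdivrMr // => tradeoff.
have lt_i : y' i < y i.
  have loss_gt0 : 0 < (1 - theta) * (y' j - y j) by rewrite mulr_gt0 ?subr_gt0.
  by rewrite -subr_gt0 -(pmulr_lgt0 _ theta_gt0); apply: lt_le_trans tradeoff.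
rewrite (pdomE _ _ neq_ij) !reduce_i !reduce_j lt_i; apply/orP; left; nra.
Qed.

End Reduction.

Lemma DhatE (R : realFieldType) (n : nat) (d : 'I_2 -> 'I_n -> 'I_n -> R)
    (i j : 'I_2) (theta : R) (s : {perm 'I_n}) :
  Dhat d i j theta s = reduce i j theta (Dvec d s).
Proof. by []. Qed.

Section ReducedParetoSet.
Variables (R : realFieldType) (n : nat) (d : 'I_2 -> 'I_n -> 'I_n -> R)
  (i j : 'I_2) (theta : R).
Hypotheses (neq_ij : i != j) (theta_01 : 0 < theta < 1).

Lemma mem_pareto_set s :
  s \in pareto_tours (Dvec d) -> Dvec d s \in pareto_set d.
Proof.
rewrite inE => /andP[tour_s /existsPn undom_s].
rewrite mem_filter /outcomes mem_undup map_f ?mem_enum ?inE // andbT.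
apply/hasPn => y; rewrite mem_undup => /mapP[s' + ->]; rewrite mem_enum inE.
by move=> tour_s'; move: (undom_s s'); rewrite tour_s'.
Qed.

Lemma pareto_tours_Dhat_sub :
  pareto_tours (Dhat d i j theta) \subset pareto_tours (Dvec d).
Proof.
apply/subsetP => s; rewrite !inE => /andP[-> /existsPn undom_s] /=.
apply/existsPn => s'; apply/negP => /andP[tour_s' /(pdom_reduce neq_ij theta_01)].
by apply/negP; move: (undom_s s'); rewrite tour_s' !DhatE.
Qed.

Lemma reduced_pareto_set_sub :
  {subset reduced_pareto_set d i j theta <= pareto_set d}.
Proof.
move=> y; rewrite mem_undup => /mapP[s + ->]; rewrite mem_enum => pareto_s.
exact/mem_pareto_set/(subsetP pareto_tours_Dhat_sub).
Qed.

Lemma notin_reduced_pareto_set s t : is_tour t ->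
  pdom (Dhat d i j theta t) (Dhat d i j theta s) ->
  Dvec d s \notin reduced_pareto_set d i j theta.
Proof.
move=> tour_t dom_ts; rewrite mem_undup; apply/mapP => -[s1].
rewrite mem_enum inE => /andP[_ /existsPn undom_s1] eq_s1.
by move: (undom_s1 t); rewrite tour_t !DhatE -eq_s1 -DhatE dom_ts.
Qed.

Lemma size_reduced_pareto_set_lt s t :
  s \in pareto_tours (Dvec d) -> is_tour t ->
  pdom (Dhat d i j theta t) (Dhat d i j theta s) ->
  (1 <= size (pareto_set d) - size (reduced_pareto_set d i j theta))%N.
Proof.
move=> pareto_s tour_t dom_ts.
have uniq_s_hatP : uniq (Dvec d s :: reduced_pareto_set d i j theta).
  by rewrite /= undup_uniq (notin_reduced_pareto_set tour_t dom_ts).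
have sub : {subset Dvec d s :: reduced_pareto_set d i j theta <= pareto_set d}.
  move=> y; rewrite inE => /orP[/eqP -> | /reduced_pareto_set_sub //].
  exact: mem_pareto_set.
by rewrite subn_gt0; apply: uniq_leq_size uniq_s_hatP sub.
Qed.

End ReducedParetoSet.

Theorem proposition1 (R : realFieldType) (n : nat)
  (d : 'I_2 -> 'I_n -> 'I_n -> R) (i j : 'I_2) (theta : R)
  (C' C'' : {perm 'I_n}) :
  (2 <= n)%N ->
  weights_pos d ->
  i != j ->
  0 < theta < 1 ->
  C' \in pareto_tours (Dvec d) ->
  C'' \in pareto_tours (Dvec d) ->
  Dvec d C'' j != Dvec d C' j ->
  (1 - theta) / theta <=
    (Dvec d C' i - Dvec d C'' i) / (Dvec d C'' j - Dvec d C' j) ->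
  (1 <= size (pareto_set d) - size (reduced_pareto_set d i j theta))%N.
Proof.
move=> _ _ neq_ij theta_01.
wlog lt_j : C' C'' / Dvec d C' j < Dvec d C'' j.
  move=> IH pareto_C' pareto_C'' ne tradeoff.
  case: (ltgtP (Dvec d C' j) (Dvec d C'' j)) => [lt_j | lt_j | eq_j].
  - exact: IH lt_j pareto_C' pareto_C'' ne tradeoff.
  - apply: (IH C'' C') => //; first by rewrite eq_sym.
    by rewrite -(opprB (Dvec d C' i)) -(opprB (Dvec d C'' j)) invrN mulrNN.
  - by rewrite eq_j eqxx in ne.
move=> pareto_C' pareto_C'' _ tradeoff.
have tour_C'' : is_tour C'' by move: pareto_C''; rewrite inE => /andP[].
apply: (size_reduced_pareto_set_lt neq_ij theta_01 pareto_C' tour_C'').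
by rewrite !DhatE; apply: reduce_pdom_of_tradeoff.
Qed.
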